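(* Let $G$ be a countable infinite group and $A$ a finite set. The Bernoulli shift $A^G$ is disjoint from every minimal, proximal $G$-flow. In particular, every minimal proximal $G$-flow has the separated covering property.
   Context: $A^G$ carries the product topology and the action $(g\cdot z)(h)=z(hg)$. A $G$-flow is proximal if for all $y_1,y_2$ there exist $z$ and a net $(g_i)$ in $G$ with $g_iy_1\to z$, $g_iy_2\to z$; minimal if every orbit is dense. Two $G$-flows are disjoint if the only closed invariant subset of their product projecting onto both factors is the whole product. For finite $D\subseteq G$, $S\subseteq G$ is $D$-separated if $Dg\cap Dh=\emptyset$ for distinct $g,h\in S$; a minimal flow $X$ has the separated covering property if for every finite $D\subseteq G$ and non-empty open $U\subseteq X$ there is a $D$-separated $S$ with $S^{-1}U=X$. *)

From Stdlib Require Import List.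
Set Implicit Arguments.

Definition is_group (G : Type) (mul : G -> G -> G) (e : G) (inv : G -> G) : Prop :=
  (forall a b c, mul a (mul b c) = mul (mul a b) c) /\
  (forall a, mul e a = a) /\ (forall a, mul a e = a) /\
  (forall a, mul (inv a) a = e) /\ (forall a, mul a (inv a) = e).

Definition countable_type (T : Type) : Prop :=
  exists f : T -> nat, forall x y, f x = f y -> x = y.
Definition infinite_type (T : Type) : Prop :=
  forall l : list T, exists x, ~ In x l.
Definition finite_type (T : Type) : Prop :=
  exists l : list T, forall x, In x l.

Definition is_topology (X : Type) (op : (X -> Prop) -> Prop) : Prop :=
  op (fun _ => True) /\
  (forall U V, op U -> op V -> op (fun x => U x /\ V x)) /\
  (forall (I : Type) (F : I -> X -> Prop),
      (forall i, op (F i)) -> op (fun x => exists i, F i x)).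

Definition is_closed (X : Type) (op : (X -> Prop) -> Prop) (C : X -> Prop) : Prop :=
  op (fun x => ~ C x).

Definition compact (X : Type) (op : (X -> Prop) -> Prop) : Prop :=
  forall (I : Type) (F : I -> X -> Prop),
    (forall i, op (F i)) -> (forall x, exists i, F i x) ->
    exists l : list I, forall x, exists i, In i l /\ F i x.

Definition hausdorff (X : Type) (op : (X -> Prop) -> Prop) : Prop :=
  forall x y, x <> y -> exists U V, op U /\ op V /\ U x /\ V y /\
    forall z, ~ (U z /\ V z).

Definition continuous (X Y : Type) (opX : (X -> Prop) -> Prop)
  (opY : (Y -> Prop) -> Prop) (f : X -> Y) : Prop :=
  forall V, opY V -> opX (fun x => V (f x)).

Definition prod_open (X Y : Type) (opX : (X -> Prop) -> Prop)
  (opY : (Y -> Prop) -> Prop) (W : X * Y -> Prop) : Prop :=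
  forall p, W p -> exists U V, opX U /\ opY V /\ U (fst p) /\ V (snd p) /\
    forall q, U (fst q) -> V (snd q) -> W q.

Definition directed (I : Type) (le : I -> I -> Prop) : Prop :=
  (exists i : I, True) /\ (forall i, le i i) /\
  (forall i j k, le i j -> le j k -> le i k) /\
  (forall i j, exists k, le i k /\ le j k).

Definition net_converges (X : Type) (op : (X -> Prop) -> Prop) (I : Type)
  (le : I -> I -> Prop) (f : I -> X) (z : X) : Prop :=
  forall U, op U -> U z -> exists i0, forall i, le i0 i -> U (f i).

Section Flows.
Variables (G : Type) (mul : G -> G -> G) (e : G) (inv : G -> G).

(* a G-flow: compact Hausdorff space with a continuous action of the discrete group G *)
Definition is_flow (X : Type) (op : (X -> Prop) -> Prop) (act : G -> X -> X) : Prop :=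
  is_topology op /\ compact op /\ hausdorff op /\
  (forall x, act e x = x) /\
  (forall g h x, act g (act h x) = act (mul g h) x) /\
  (forall g, continuous op op (act g)).

Definition minimal_flow (X : Type) (op : (X -> Prop) -> Prop) (act : G -> X -> X) : Prop :=
  forall x U, op U -> (exists y, U y) -> exists g, U (act g x).

Definition proximal_flow (X : Type) (op : (X -> Prop) -> Prop) (act : G -> X -> X) : Prop :=
  forall y1 y2 : X, exists (z : X) (I : Type) (le : I -> I -> Prop) (gs : I -> G),
    directed le /\
    net_converges op le (fun i => act (gs i) y1) z /\
    net_converges op le (fun i => act (gs i) y2) z.

Definition disjoint_flows (X Y : Type) (opX : (X -> Prop) -> Prop) (actX : G -> X -> X)
  (opY : (Y -> Prop) -> Prop) (actY : G -> Y -> Y) : Prop :=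
  forall C : X * Y -> Prop,
    is_closed (prod_open opX opY) C ->
    (forall g p, C p -> C (actX g (fst p), actY g (snd p))) ->
    (forall x, exists y, C (x, y)) ->
    (forall y, exists x, C (x, y)) ->
    forall p, C p.

Definition separated (D : list G) (S : G -> Prop) : Prop :=
  forall g h, S g -> S h -> g <> h ->
    forall d1 d2, In d1 D -> In d2 D -> mul d1 g <> mul d2 h.

(* S^{-1} U = X  means: every x has some s in S with s x in U *)
Definition separated_covering (X : Type) (op : (X -> Prop) -> Prop) (act : G -> X -> X) : Prop :=
  forall (D : list G) (U : X -> Prop), op U -> (exists x, U x) ->
    exists S : G -> Prop, separated D S /\
      forall x, exists s, S s /\ U (act s x).

(* product topology with A discrete: W open iff membership is witnessed by a
   finite set of coordinates (basic cylinder sets) *)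
Definition shift_open (A : Type) (W : (G -> A) -> Prop) : Prop :=
  forall z, W z -> exists F : list G,
    forall z', (forall h, In h F -> z' h = z h) -> W z'.

Definition shift_act (A : Type) (g : G) (z : G -> A) : G -> A :=
  fun h => z (mul h g).

End Flows.

(* First, in a minimal proximal flow every finite set of points
   can be translated by a single group element into any non-empty open set:
   proximality lets one contract finite sets one point at a time (compactness
   supplies a limit for the new point along the contracting elements), and
   minimality then moves the contraction point into the open set.
   Second, since G is countable, a greedy colouring of the bounded-degree graph
   joining g to d'^-1 d g (d, d' in a finite D) uses finitely many colours, and
   each colour class is D-separated.
   Covering: if no colour class covered X, choose for each colour j a point
   missed by class j and translate all of them into U by one g; then g covers
   the point chosen for its own colour.
   Disjointness: if (z, x) lay outside a closed invariant C projecting onto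
   both factors, with F the coordinates of a basic neighbourhood of z, then on
   each F-separated colour class j there is a configuration w_j whose translate
   by any g of colour j agrees with z on F; pairing each w_j with some x_j in C
   and translating all x_j into a neighbourhood of x by one g, the point
   g (w_j, x_j) of C, for j the colour of g, lies in that neighbourhood of (z, x). *)
From Stdlib Require Import List Lia Arith Classical ClassicalEpsilon.
From Stdlib Require Import FunctionalExtensionality PropExtensionality.
Set Implicit Arguments.

Definition fresh (l : list nat) : nat :=
  epsilon (inhabits 0) (fun n => n <= length l /\ ~ In n l).

Lemma fresh_spec (l : list nat) : fresh l <= length l /\ ~ In (fresh l) l.
Proof.
  unfold fresh; apply epsilon_spec.
  apply NNPP; intro Hnone.
  assert (Hincl : incl (seq 0 (S (length l))) l).
  { intros n Hn; apply in_seq in Hn.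
    apply NNPP; intro Hnl; apply Hnone; exists n; split; [lia | exact Hnl]. }
  pose proof (NoDup_incl_length (seq_NoDup _ _) Hincl) as Hlen.
  rewrite length_seq in Hlen; lia.
Qed.

Section GreedyColouring.
Variables (V : Type) (nbr : V -> list V) (rank : V -> nat).

Definition lower_nbr (v : V) : list V := filter (fun u => rank u <? rank v) (nbr v).

(* The fuel only has to exceed the rank of the vertex being coloured. *)
Fixpoint greedy (fuel : nat) (v : V) : nat :=
  match fuel with
  | 0 => 0
  | S fuel' => fresh (map (greedy fuel') (lower_nbr v))
  end.

Lemma greedy_fuel_irrelevant (n : nat) (v : V) (m : nat) :
  rank v < n -> n <= m -> greedy m v = greedy n v.
Proof.
  revert v m; induction n as [|n IHn]; intros v m Hv Hm; [lia|].
  destruct m as [|m]; [lia|]; simpl; f_equal.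
  apply map_ext_in; intros u Hu.
  apply filter_In in Hu as [_ Hlt]; apply Nat.ltb_lt in Hlt.
  apply IHn; lia.
Qed.

Definition greedy_colour (v : V) : nat := greedy (S (rank v)) v.

Lemma greedy_colour_le (K : nat) (v : V) :
  (forall u, length (nbr u) <= K) -> greedy_colour v <= K.
Proof.
  intro HK; unfold greedy_colour; simpl.
  destruct (fresh_spec (map (greedy (rank v)) (lower_nbr v))) as [Hle _].
  rewrite length_map in Hle.
  assert (length (lower_nbr v) <= length (nbr v)) by apply filter_length_le.
  specialize (HK v); lia.
Qed.

Lemma greedy_colour_proper (u v : V) :
  In u (nbr v) -> rank u < rank v -> greedy_colour v <> greedy_colour u.
Proof.
  intros Hu Hlt Heq; unfold greedy_colour in Heq; simpl in Heq.
  apply (proj2 (fresh_spec (map (greedy (rank v)) (lower_nbr v)))).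
  rewrite Heq; apply in_map_iff; exists u; split.
  - change (greedy (rank v) u = greedy (S (rank u)) u).
    apply greedy_fuel_irrelevant; lia.
  - apply filter_In; split; [exact Hu | apply Nat.ltb_lt; exact Hlt].
Qed.

End GreedyColouring.

Section SeparatedColouring.
Variables (G : Type) (mul : G -> G -> G) (e : G) (inv : G -> G).
Hypothesis HG : is_group mul e inv.

Lemma mul_invK (a b : G) : mul (inv a) (mul a b) = b.
Proof.
  destruct HG as [Hassoc [Hel [_ [Hil _]]]].
  rewrite Hassoc, Hil, Hel; reflexivity.
Qed.

Lemma mul_cancel_r (a b g : G) : mul a g = mul b g -> a = b.
Proof.
  destruct HG as [Hassoc [_ [Her [_ Hir]]]]; intro Heq.
  rewrite <- (Her a), <- (Her b), <- (Hir g), !Hassoc, Heq; reflexivity.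
Qed.

Lemma separated_translate_eq (D : list G) (S : G -> Prop) (g g' d d' : G) :
  separated mul D S -> S g -> S g' -> In d D -> In d' D ->
  mul d g = mul d' g' -> g = g'.
Proof.
  intros Hsep Hg Hg' Hd Hd' Heq; apply NNPP; intro Hne.
  exact (Hsep g g' Hg Hg' Hne d d' Hd Hd' Heq).
Qed.

Definition translate_nbr (D : list G) (g : G) : list G :=
  map (fun p => mul (inv (snd p)) (mul (fst p) g)) (list_prod D D).

Lemma in_translate_nbr (D : list G) (g g' d d' : G) :
  In d D -> In d' D -> mul d g = mul d' g' -> In g' (translate_nbr D g).
Proof.
  intros Hd Hd' Heq; apply in_map_iff; exists (d, d'); simpl; split.
  - rewrite Heq; apply mul_invK.
  - apply in_prod; assumption.
Qed.

Lemma separated_colouring (D : list G) :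
  countable_type G ->
  exists (col : G -> nat) (K : nat),
    (forall g, col g <= K) /\ forall j, separated mul D (fun g => col g = j).
Proof.
  intros [rank Hrank].
  exists (greedy_colour (translate_nbr D) rank), (length D * length D); split.
  - intro g; apply greedy_colour_le; intro u.
    unfold translate_nbr; rewrite length_map, length_prod; lia.
  - intros j g g' Hg Hg' Hne d d' Hd Hd' Heq.
    assert (Hrk : rank g <> rank g') by (intro Hr; exact (Hne (Hrank _ _ Hr))).
    destruct (Nat.lt_gt_cases (rank g) (rank g')) as [[Hlt | Hlt] _]; [exact Hrk| |].
    + apply (greedy_colour_proper (translate_nbr D) rank g g'); [| exact Hlt | congruence].
      eapply in_translate_nbr; [exact Hd' | exact Hd | symmetry; exact Heq].
    + apply (greedy_colour_proper (translate_nbr D) rank g' g); [| exact Hlt | congruence].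
      eapply in_translate_nbr; [exact Hd | exact Hd' | exact Heq].
Qed.

End SeparatedColouring.

Lemma open_finite_inter (X I : Type) (op : (X -> Prop) -> Prop) (l : list I)
  (P : I -> X -> Prop) :
  is_topology op -> (forall i, op (P i)) -> op (fun y => forall i, In i l -> P i y).
Proof.
  intros [HT [HI _]] HP; induction l as [|a l IH].
  - replace (fun y => forall i, In i nil -> P i y) with (fun _ : X => True); [exact HT|].
    apply functional_extensionality; intro y; apply propositional_extensionality.
    split; [intros _ i [] | trivial].
  - replace (fun y => forall i, In i (a :: l) -> P i y)
      with (fun y => P a y /\ forall i, In i l -> P i y); [apply HI; auto|].
    apply functional_extensionality; intro y; apply propositional_extensionality.
    split; [intros [Ha Hl] i [<- | Hi]; auto | intro H; split; auto with datatypes].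
Qed.

Section MinimalProximalFlow.
Variables (G : Type) (mul : G -> G -> G) (e : G) (X : Type)
  (op : (X -> Prop) -> Prop) (act : G -> X -> X).
Hypothesis Hflow : is_flow mul e op act.
Hypothesis Hprox : proximal_flow op act.

Definition contracts_to (L : list X) (v : X) : Prop :=
  forall O, op O -> O v -> exists g, forall y, In y L -> O (act g y).

Lemma open_preimage (g : G) (O : X -> Prop) : op O -> op (fun q => O (act g q)).
Proof. intro hO; destruct Hflow as [_ [_ [_ [_ [_ Hcont]]]]]; exact (Hcont g O hO). Qed.

Lemma act_mul (g h : G) (x : X) : act g (act h x) = act (mul g h) x.
Proof. destruct Hflow as [_ [_ [_ [_ [Hmul _]]]]]; apply Hmul. Qed.

Lemma contracts_to_singleton (x : X) : contracts_to (x :: nil) x.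
Proof.
  destruct Hflow as [_ [_ [_ [Hae _]]]].
  intros O _ Hx; exists e; intros y [<- | []]; rewrite Hae; exact Hx.
Qed.

(* [u] is a cluster point of [g x] along the elements [g] contracting [L] to [w]. *)
Lemma contraction_cluster_point (L : list X) (w x : X) :
  contracts_to L w ->
  exists u, forall O O', op O -> O w -> op O' -> O' u ->
    exists g, (forall y, In y L -> O (act g y)) /\ O' (act g x).
Proof.
  destruct Hflow as [Htop [Hcomp _]]; intro Hw.
  apply NNPP; intro Hnone.
  assert (Hsep : forall u, exists p : (X -> Prop) * (X -> Prop),
    op (fst p) /\ fst p w /\ op (snd p) /\ snd p u /\
    forall g, ~ ((forall y, In y L -> fst p (act g y)) /\ snd p (act g x))).
  { intro u; apply NNPP; intro Hu; apply Hnone; exists u.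
    intros O O' hO Ow hO' O'u; apply NNPP; intro Hg; apply Hu.
    exists (O, O'); simpl; repeat split; auto.
    intros g Hg'; apply Hg; exists g; exact Hg'. }
  destruct (choice _ Hsep) as [nb Hnb].
  destruct (Hcomp X (fun u => snd (nb u))) as [l Hl].
  - intro u; apply Hnb.
  - intro u; exists u; apply Hnb.
  - set (O := fun y => forall u, In u l -> fst (nb u) y).
    assert (hO : op O).
    { apply (open_finite_inter l (fun u => fst (nb u)) Htop); intro u; apply Hnb. }
    destruct (Hw O hO) as [g Hg]; [intros u _; apply Hnb|].
    destruct (Hl (act g x)) as [u [Hul Hxu]].
    apply (proj2 (proj2 (proj2 (proj2 (Hnb u)))) g); split; [|exact Hxu].
    intros y Hy; exact (Hg y Hy u Hul).
Qed.

Lemma contracts_to_cons (L : list X) (w x : X) :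
  contracts_to L w -> exists z, contracts_to (x :: L) z.
Proof.
  intro Hw; destruct (contraction_cluster_point x Hw) as [u Hu].
  destruct (Hprox w u) as [z [I [le [gs [Hdir [Hwz Huz]]]]]].
  exists z; intros O hO Oz.
  destruct (Hwz O hO Oz) as [i1 Hi1]; destruct (Huz O hO Oz) as [i2 Hi2].
  destruct Hdir as [_ [_ [_ Hup]]]; destruct (Hup i1 i2) as [k [Hk1 Hk2]].
  pose proof (open_preimage (gs k) hO) as hP.
  destruct (Hu _ _ hP (Hi1 k Hk1) hP (Hi2 k Hk2)) as [g [HgL Hgx]].
  exists (mul (gs k) g); intros y Hy; rewrite <- act_mul.
  destruct Hy as [<- | Hy]; [exact Hgx | exact (HgL y Hy)].
Qed.

Lemma finite_contraction (x : X) (L : list X) : exists z, contracts_to (x :: L) z.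
Proof.
  revert x; induction L as [|y L IH]; intro x.
  - exists x; apply contracts_to_singleton.
  - destruct (IH y) as [w Hw]; exact (contracts_to_cons x Hw).
Qed.

Hypothesis Hmin : minimal_flow op act.

Lemma translate_finite_into_open (L : list X) (V : X -> Prop) :
  op V -> (exists y, V y) -> exists g, forall y, In y L -> V (act g y).
Proof.
  intros hV HV; destruct L as [|x L].
  - exists e; intros y [].
  - destruct (finite_contraction x L) as [z Hz].
    destruct (Hmin z hV HV) as [h Hh].
    destruct (Hz _ (open_preimage h hV) Hh) as [g Hg].
    exists (mul h g); intros y Hy; rewrite <- act_mul; exact (Hg y Hy).
Qed.

Lemma translate_family_into_open (xs : nat -> X) (K : nat) (V : X -> Prop) :
  op V -> (exists y, V y) -> exists g, forall j, j <= K -> V (act g (xs j)).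
Proof.
  intros hV HV.
  destruct (translate_finite_into_open (map xs (seq 0 (S K))) hV HV) as [g Hg].
  exists g; intros j Hj; apply Hg, in_map, in_seq; lia.
Qed.

End MinimalProximalFlow.

Section CountableGroupFlows.
Variables (G : Type) (mul : G -> G -> G) (e : G) (inv : G -> G).
Hypothesis HG : is_group mul e inv.
Hypothesis Hcount : countable_type G.
Variables (X : Type) (op : (X -> Prop) -> Prop) (act : G -> X -> X).
Hypothesis Hflow : is_flow mul e op act.
Hypothesis Hmin : minimal_flow op act.
Hypothesis Hprox : proximal_flow op act.

(* Each [k] lies in at most one [F g] with [g] of colour [j], so [w j] can read
   off [z] there. *)
Lemma shift_pattern_by_colour (A : Type) (F : list G) (col : G -> nat) (z : G -> A) :
  (forall j, separated mul F (fun g => col g = j)) ->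
  exists w : nat -> G -> A,
    forall g h, In h F -> shift_act mul g (w (col g)) h = z h.
Proof.
  intro Hsep.
  exists (fun j k => z (epsilon (inhabits e)
    (fun h => In h F /\ exists g, col g = j /\ k = mul h g))).
  intros g h Hh; unfold shift_act.
  destruct (epsilon_spec (inhabits e)
    (fun h' => In h' F /\ exists g', col g' = col g /\ mul h g = mul h' g'))
    as [Hh' [g' [Hcol Heq]]]; [exists h; split; [exact Hh | exists g; auto]|].
  assert (g = g') as <- by exact (separated_translate_eq _ _ _ _ (Hsep (col g)) eq_refl Hcol Hh Hh' Heq).
  f_equal; symmetry; exact (mul_cancel_r HG _ _ _ Heq).
Qed.

Lemma shift_disjoint_minimal_proximal (A : Type) :
  disjoint_flows (@shift_open G A) (shift_act mul (A:=A)) op act.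
Proof.
  intros C HC Hinv Hproj _ [z x]; apply NNPP; intro Hzx.
  destruct (HC (z, x) Hzx) as [U [V [hU [hV [Uz [Vx HUV]]]]]]; simpl in Uz, Vx.
  destruct (hU z Uz) as [F HF].
  destruct (separated_colouring HG F Hcount) as [col [K [Hle Hsep]]].
  destruct (shift_pattern_by_colour col z Hsep) as [w Hw].
  destruct (choice _ (fun j => Hproj (w j))) as [xs Hxs].
  destruct (translate_family_into_open Hflow Hprox Hmin xs K V hV (ex_intro _ x Vx))
    as [g Hg].
  apply (HUV (shift_act mul g (w (col g)), act g (xs (col g)))).
  - exact (HF _ (Hw g)).
  - exact (Hg (col g) (Hle g)).
  - exact (Hinv g _ (Hxs (col g))).
Qed.

Lemma minimal_proximal_separated_covering : separated_covering mul op act.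
Proof.
  intros D U hU HU.
  destruct (separated_colouring HG D Hcount) as [col [K [Hle Hsep]]].
  assert (Hcover : exists j, forall x, exists s, col s = j /\ U (act s x)).
  { apply NNPP; intro Hnone.
    assert (Hmissed : forall j, exists x, ~ exists s, col s = j /\ U (act s x)).
    { intro j; apply NNPP; intro Hj; apply Hnone; exists j; intro x.
      apply NNPP; intro Hx; apply Hj; exists x; exact Hx. }
    destruct (choice _ Hmissed) as [xs Hxs].
    destruct (translate_family_into_open Hflow Hprox Hmin xs K U hU HU) as [g Hg].
    apply (Hxs (col g)); exists g; split; [reflexivity | exact (Hg (col g) (Hle g))]. }
  destruct Hcover as [j Hj].
  exists (fun s => col s = j); split; [apply Hsep | exact Hj].
Qed.

End CountableGroupFlows.

Theorem corollary4p5 (G : Type) (mul : G -> G -> G) (e : G) (inv : G -> G)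
  (A : Type)
  (HG : is_group mul e inv) (Hcount : countable_type G) (Hinf : infinite_type G)
  (HA : finite_type A) :
  forall (X : Type) (op : (X -> Prop) -> Prop) (act : G -> X -> X),
    is_flow mul e op act ->
    minimal_flow op act ->
    proximal_flow op act ->
    disjoint_flows (@shift_open G A) (shift_act mul (A:=A)) op act /\
    separated_covering mul op act.
Proof.
  intros X op act Hflow Hmin Hprox; split.
  - exact (shift_disjoint_minimal_proximal (A := A) HG Hcount Hflow Hmin Hprox).
  - exact (minimal_proximal_separated_covering HG Hcount Hflow Hmin Hprox).
Qed.
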